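(* Let $m_0$ be an initial model, $a$ a (comparison-based) black-box optimization algorithm run inside the BBoxER framework described in the context, $\omega$ a fixed random seed, $b\in\mathbb{N}$ a budget, $s$ the dataset size and $\epsilon>0$. Assume that $N(\omega,a,b)$ is finite and that there is $\delta_{1,\epsilon}$ such that for every parameter $x$, $$P_{\omega_D}\big(|\widehat L(x)-L(x)|>\epsilon\big)\le \delta_{1,\epsilon}.$$ Then $$P_{\omega_D}\big(|\widehat L(\widehat x)-L(\widehat x)|>\epsilon\big)\le N(\omega,a,b)\cdot \delta_{1,\epsilon},$$ and $$P_{\omega_D}\Big(\sup_{1\le i\le b}|\widehat L(x_i)-L(x_i)|>\epsilon\Big)\le b\cdot N(\omega,a,b)\cdot \delta_{1,\epsilon}.$$
   Context: BBoxER framework. Fix an initial model $m_0$ and a map $(m_0,x)\mapsto \mathrm{modified}(m_0,x)$ sending a parameter $x$ to a model. Let $\mathcal D$ be the class of datasets $D$ of size $s$ drawn from a probability distribution $F$ on $\mathcal X\times\mathcal Y$; $\omega_D$ denotes the randomness of the draw of $D$. A black-box optimization algorithm $a$, deterministic given its seed $\omega$, is run with budget $b$ on $D$: it is initialized from $\omega$; at each iteration $i=1,\dots,b$ it proposes a parameter $x_i$ and model $m_i=\mathrm{modified}(m_0,x_i)$, declares a finite number $k_i\ge1$ of possible comparison outcomes, then receives $\mathrm{choice}_i\in\{1,\dots,k_i\}$ computed by comparing $m_1,\dots,m_i$ on $D$; after $b$ iterations it recommends $\widehat x$ and outputs $\mathrm{modified}(m_0,\widehat x)$. The algorithm accesses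 $D$ only through the values $\mathrm{choice}_i$, so $x_i$ and $k_i$ are deterministic functions of $(\omega,a,b,\mathrm{choice}_1,\dots,\mathrm{choice}_{i-1})$ and $\widehat x$ is a deterministic function of $(\omega,a,b,\mathrm{choice}_1,\dots,\mathrm{choice}_b)$. The internal state after $b$ iterations is $S(\omega,D,a,b)=(\omega,\mathrm{choice}_1,\dots,\mathrm{choice}_b)$, and $N(\omega,a,b)=\operatorname{Card}\{S(\omega,D,a,b): D\in\mathcal D\}$. $L(x)$ denotes the generalization (expected) error under $F$ of $\mathrm{modified}(m_0,x)$ and $\widehat L(x)$ its empirical error on $D$. *)

From HB Require Import structures.
From mathcomp Require Import all_boot all_order all_algebra.
From mathcomp Require Import all_classical all_reals all_analysis.
From mathcomp Require Import finmap.
Set Implicit Arguments. Unset Strict Implicit. Unset Printing Implicit Defensive.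
Import Order.TTheory GRing.Theory Num.Theory.
Local Open Scope ring_scope.
Local Open Scope classical_set_scope.
Local Open Scope fset_scope.

(** A black-box optimization algorithm, deterministic given its seed:
    every quantity is a deterministic function of
    (seed, budget b, previous comparison outcomes choice_1..choice_{i-1}). *)
Record bbo_algo (Seed Param : Type) := BBOAlgo {
  propose   : Seed -> nat -> seq nat -> Param;
  kdecl     : Seed -> nat -> seq nat -> nat;
  recommend : Seed -> nat -> seq nat -> Param
}.

Section Run.
Variables (Seed Param Model Dset : Type).
Variables (modified : Model -> Param -> Model) (m0 : Model).
(* [compare k ms D] : outcome in {1..k} of comparing the models ms = [m_1;..;m_i] on D *)
Variable compare : nat -> seq Model -> Dset -> nat.
Variables (a : bbo_algo Seed Param) (w : Seed) (b : nat).

Definition bbo_models (ch : seq nat) (i : nat) : seq Model :=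
  [seq modified m0 (propose a w b (take j ch)) | j <- iota 0 i.+1].

Fixpoint bbo_choices (D : Dset) (i : nat) : seq nat :=
  match i with
  | 0 => [::]
  | i'.+1 =>
      let ch := bbo_choices D i' in
      rcons ch (compare (kdecl a w b ch) (bbo_models ch i') D)
  end.

(* internal state S(w,D,a,b) = (w, choice_1, ..., choice_b); w is fixed,
   so we record the choices only (same cardinality). *)
Definition bbo_state (D : Dset) : seq nat := bbo_choices D b.

(* the parameter x_i, 1 <= i <= b, proposed when running on D *)
Definition bbo_x (D : Dset) (i : nat) : Param :=
  propose a w b (take i.-1 (bbo_state D)).

Definition bbo_xhat (D : Dset) : Param := recommend a w b (bbo_state D).

(* N(w,a,b) = Card { S(w,D,a,b) : D in \mathcal D } (meaningful when finite) *)
Definition bbo_N (Dclass : set Dset) : nat :=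
  (#|` fset_set [set bbo_state D | D in Dclass] |)%N.
End Run.

Section Errors.
Variables (d : measure_display) (T : measurableType d) (R : realType).
Variables (Param Model : Type) (modified : Model -> Param -> Model) (m0 : Model).
Variable loss : Model -> T -> R.
Variable F : probability T R.      (* distribution on X x Y *)
Variable s : nat.

Definition gen_err (x : Param) : R :=
  Rintegral F setT (loss (modified m0 x)).

Definition emp_err (x : Param) (D : s.-tuple T) : R :=
  (s%:R)^-1 * \sum_(j < s) loss (modified m0 x) (tnth D j).
End Errors.

(* The random dataset Dr : Omega -> s.-tuple T consists of s i.i.d. draws
   from F (product rule over every family of measurable sets). *)
Definition iid_dataset (d : measure_display) (T : measurableType d) (R : realType)
  (dO : measure_display) (Omega : measurableType dO) (P : probability Omega R)
  (F : probability T R) (s : nat) (Dr : Omega -> s.-tuple T) : Prop :=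
  (forall j : 'I_s, measurable_fun setT (fun o => tnth (Dr o) j)) /\
  (forall A : 'I_s -> set T, (forall j, measurable (A j)) ->
     P [set o | forall j, A j (tnth (Dr o) j)] = (\prod_(j < s) F (A j))%E).

From HB Require Import structures.
From mathcomp Require Import all_boot all_order all_algebra.
From mathcomp Require Import all_classical all_reals all_analysis.
From mathcomp Require Import finmap measurable_realfun.
Set Implicit Arguments. Unset Strict Implicit. Unset Printing Implicit Defensive.
Import Order.TTheory GRing.Theory Num.Theory.
Local Open Scope ring_scope.
Local Open Scope classical_set_scope.

(** The recommendation and every proposal x_i are deterministic functions of
    the internal state (choice_1, ..., choice_b), which takes at most N values
    c.  Hence the event "the error of the recommendation deviates by more than
    eps" is covered by the N events {state = c} /\ {the error of the parameter
    chosen in state c deviates}, and each of those is contained in a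
    deviation event for a FIXED parameter, of probability at most delta.  No
    independence between the dataset and the chosen parameter is needed: a
    union bound over the states gives N delta, and a further union bound over
    the b proposals gives b N delta. *)

Lemma lt_bigmax_ex d (T : orderType d) (I : finType) (x e : T) (F : I -> T) :
  (x <= e)%O -> (e < \big[Order.max/x]_i F i)%O -> exists i, (e < F i)%O.
Proof.
move=> le_xe; rewrite ltNge => /bigmax_leP not_le; apply: contra_notP not_le.
by move=> /forallNP lt_e; split=> // i _; rewrite leNgt; apply/negP/lt_e.
Qed.

Lemma lt_bigmax_nat_bigsetU d (T : orderType d) (U : Type) (x e : T)
    (f : U -> nat -> T) n : (x <= e)%O ->
  [set u | (e < \big[Order.max/x]_(1 <= i < n.+1) f u i)%O] =
  \big[setU/set0]_(i < n) [set u | (e < f u i.+1)%O].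
Proof.
move=> le_xe; rewrite -(bigcup_mkord n (fun i => [set u | (e < f u i.+1)%O])).
apply/seteqP; split => u /=.
  rewrite big_add1 /= big_mkord => /(lt_bigmax_ex le_xe) [i lt_e].
  by exists i => //=; exact: ltn_ord.
move=> [i /= lt_in lt_e]; rewrite big_add1 /= big_mkord.
exact: lt_le_trans lt_e (le_bigmax _ _ (Ordinal lt_in)).
Qed.

Section choices_measurable.
Variables (dO : measure_display) (Omega : measurableType dO).
Variables (Seed Param Model Dset : Type).
Variables (modified : Model -> Param -> Model) (m0 : Model).
Variables (compare : nat -> seq Model -> Dset -> nat) (Dr : Omega -> Dset).
Variables (a : bbo_algo Seed Param) (w : Seed) (b : nat).
Hypothesis compare_measurable :
  forall k ms c, measurable [set o | compare k ms (Dr o) = c].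

Lemma measurable_bbo_choices_eq i ch :
  measurable [set o | bbo_choices modified m0 compare a w b (Dr o) i = ch].
Proof.
elim: i ch => [|i IH] ch /=.
  case: ch => [|c ch].
    by rewrite (_ : [set _ | _] = setT) //; apply/seteqP.
  by rewrite (_ : [set _ | _] = set0) //; apply/seteqP; split => o.
case/lastP: ch => [|ch c].
  rewrite (_ : [set _ | _] = set0) //; apply/seteqP; split => o //=.
  by move/(congr1 size); rewrite size_rcons.
rewrite (_ : [set _ | _] =
  [set o | bbo_choices modified m0 compare a w b (Dr o) i = ch] `&`
  [set o | compare (kdecl a w b ch) (bbo_models modified m0 a w b ch i) (Dr o) = c]).
  exact: measurableI.
apply/seteqP; split => o /=.
  by move/eqP; rewrite eqseq_rcons => /andP[/eqP -> /eqP <-].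
by case=> -> ->.
Qed.

Lemma measurable_bbo_state_eq ch :
  measurable [set o | bbo_state modified m0 compare a w b (Dr o) = ch].
Proof. exact: measurable_bbo_choices_eq. Qed.

End choices_measurable.

Section union_bound_over_states.
Variables (d : measure_display) (T : ringOfSetsType d) (R : realFieldType).
Variable mu : {content set T -> \bar R}.
Variables (S : choiceType) (st : T -> S) (SS : set S).
Hypotheses (SS_fin : finite_set SS) (st_in : forall t, SS (st t)).
Hypothesis st_measurable : forall c, measurable [set t | st t = c].
Variable A : S -> set T.
Hypothesis A_measurable : forall c, measurable (A c).

Lemma state_event_bigcup :
  [set t | A (st t) t] = \bigcup_(c in SS) ([set t | st t = c] `&` A c).
Proof.
apply/seteqP; split => [t At|t [c _ [/= <- //]]].
by exists (st t) => //; split.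
Qed.

Lemma measurable_state_event : measurable [set t | A (st t) t].
Proof.
rewrite state_event_bigcup; apply: fin_bigcup_measurable => // c _.
exact: measurableI.
Qed.

Lemma state_event_le (delta : R) : (forall c, mu (A c) <= delta%:E)%E ->
  (mu [set t | A (st t) t] <= ((#|` fset_set SS|)%fset%:R * delta)%:E)%E.
Proof.
move=> muA.
have mAc c : SS c -> measurable ([set t | st t = c] `&` A c).
  by move=> _; exact: measurableI.
have sub_bigcup :
    [set t | A (st t) t] `<=` \bigcup_(c in SS) ([set t | st t = c] `&` A c).
  by rewrite -state_event_bigcup.
rewrite (le_trans (content_sub_fsum mu SS_fin mAc measurable_state_event sub_bigcup)) //.
rewrite fsbig_finite //= (@le_trans _ _ (\sum_(c <- fset_set SS) delta%:E)%E) //.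
  apply: lee_sum => c _; apply: le_trans (muA c).
  apply: le_measure; last exact: subIsetr.
    by apply/mem_set; exact: measurableI.
  by apply/mem_set; exact: A_measurable.
rewrite big_const_seq count_predT iter_addr_0.
by rewrite mulr_natl EFin_natmul.
Qed.

End union_bound_over_states.

Section deviation_event.
Variables (R : realType) (d : measure_display) (T : measurableType d).
Variables (dO : measure_display) (Omega : measurableType dO).
Variables (F : probability T R) (Param Model : Type).
Variables (modified : Model -> Param -> Model) (m0 : Model) (loss : Model -> T -> R).
Variables (s : nat) (Dr : Omega -> s.-tuple T) (eps : R).
Hypothesis Dr_measurable : forall j, measurable_fun setT (fun o => tnth (Dr o) j).
Hypothesis loss_measurable : forall m, measurable_fun setT (loss m).

Definition deviation_event (x : Param) : set Omega :=
  [set o | eps < `| emp_err modified m0 loss x (Dr o) - gen_err modified m0 loss F x |].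

Lemma measurable_deviation_event x : measurable (deviation_event x).
Proof.
have mdev : measurable_fun setT
    (fun o => `| emp_err modified m0 loss x (Dr o) - gen_err modified m0 loss F x |).
  apply: measurableT_comp => //; apply: measurable_funB => //.
  apply: measurable_funM => //; apply: measurable_sum => j.
  exact: measurableT_comp (loss_measurable _) (Dr_measurable j).
have := mdev measurableT _ (measurable_itv `]eps, +oo[%O).
by rewrite setTI; congr measurable; apply/seteqP; split => o /=; rewrite in_itv /= andbT.
Qed.

End deviation_event.

Theorem theorem1
  (R : realType)
  (dO : measure_display) (Omega : measurableType dO) (P : probability Omega R)
  (d : measure_display) (T : measurableType d) (F : probability T R)
  (Seed Param Model : Type) (modified : Model -> Param -> Model) (m0 : Model)
  (loss : Model -> T -> R) (s : nat) (Dr : Omega -> s.-tuple T)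
  (compare : nat -> seq Model -> s.-tuple T -> nat)
  (a : bbo_algo Seed Param) (w : Seed) (b : nat) (eps delta1 : R)
  (Hiid : iid_dataset P F Dr)
  (Hloss : forall m, measurable_fun setT (loss m))
  (Hk : forall b' ch, (0 < kdecl a w b' ch)%N)
  (Hcmp_range : forall k ms D, (0 < k)%N -> (1 <= compare k ms D <= k)%N)
  (Hcmp_meas : forall k ms c, measurable [set o | compare k ms (Dr o) = c])
  (Heps : 0 < eps)
  (HNfin : finite_set [set bbo_state modified m0 compare a w b D | D in [set: s.-tuple T]])
  (Hdelta : forall x : Param,
     (P [set o | (eps < `| emp_err modified m0 loss x (Dr o) - gen_err modified m0 loss F x |)%R ]
       <= delta1%:E)%E) :
  let N := bbo_N modified m0 compare a w b [set: s.-tuple T] in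
  (P [set o | (eps < `| emp_err modified m0 loss (bbo_xhat modified m0 compare a w b (Dr o)) (Dr o)
                      - gen_err modified m0 loss F (bbo_xhat modified m0 compare a w b (Dr o)) |)%R ]
    <= (N%:R * delta1)%:E)%E
  /\
  (P [set o | (eps < \big[Order.max/0]_(1 <= i < b.+1)
               `| emp_err modified m0 loss (bbo_x modified m0 compare a w b (Dr o) i) (Dr o)
                  - gen_err modified m0 loss F (bbo_x modified m0 compare a w b (Dr o) i) |)%R ]
    <= (b%:R * N%:R * delta1)%:E)%E.
Proof.
move=> N; have [Dr_measurable _] := Hiid.
pose st o := bbo_state modified m0 compare a w b (Dr o).
have st_in o : [set bbo_state modified m0 compare a w b D | D in [set: s.-tuple T]] (st o).
  by exists (Dr o).
have st_meas c : measurable [set o | st o = c] :=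
  measurable_bbo_state_eq modified m0 a w b Hcmp_meas c.
pose dev := deviation_event F modified m0 loss Dr eps.
have dev_meas x : measurable (dev x) :=
  measurable_deviation_event F modified m0 eps Dr_measurable Hloss x.
have dev_state_meas (g : seq nat -> Param) : measurable [set o | dev (g (st o)) o].
  exact (measurable_state_event HNfin st_in st_meas (fun c => dev_meas (g c))).
have dev_state_le (g : seq nat -> Param) :
    (P [set o | dev (g (st o)) o] <= (N%:R * delta1)%:E)%E.
  exact (state_event_le HNfin st_in st_meas (fun c => dev_meas (g c)) (fun c => Hdelta (g c))).
split; first exact: dev_state_le (recommend a w b).
pose x_of i c := propose a w b (take i c).
pose dev_x i := [set o | dev (x_of i (st o)) o].
rewrite lt_bigmax_nat_bigsetU ?(ltW Heps) //.
(* [bbo_x D i.+1] is convertible to [x_of i (bbo_state D)]. *)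
suff : (P (\big[setU/set0]_(i < b) dev_x i) <= (b%:R * N%:R * delta1)%:E)%E by [].
apply: le_trans (Boole_inequality P (fun i (_ : (i < b)%N) => dev_state_meas (x_of i))) _.
apply: (@le_trans _ _ (\sum_(i < b) (N%:R * delta1)%:E)%E).
  by apply: lee_sum => i _; exact: dev_state_le.
by rewrite sumEFin sumr_const card_ord -mulrA (mulr_natl _ b).
Qed.
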